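(* Let $X$ be a finite set with $n\ge1$ elements. The number of uniformizable topologies on $X$, and also the number of topologies on $X$ that are both uniformizable and functional Alexandroff, equals the Bell number $B_n$ (the number of partitions of $X$), where $B_0=B_1=1$ and $B_{k+1}=\sum_{i=0}^{k}\binom{k}{i}B_i$ for $k\ge1$.
   Context: A topology on $X$ is uniformizable if it is induced by some uniform structure on $X$. For $f:X\to X$ and $a\in X$ let $V_f(a):=\{x\in X:\exists n\ge0,\ f^n(x)=a\}$; the topology with basis $\{V_f(a):a\in X\}$ is the functional Alexandroff topology associated to $f$, and a topology is functional Alexandroff if it equals the functional Alexandroff topology of some self-map of $X$. *)

From mathcomp Require Import all_boot.
Set Implicit Arguments. Unset Strict Implicit. Unset Printing Implicit Defensive.

Section Defs.
Variable X : finType.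

(* A topology on the finite set X, given by its family of open sets.  Since X
   is finite, closure under arbitrary unions is equivalent to containing set0
   and closure under binary unions. *)
Definition is_topology (T : {set {set X}}) : bool :=
  [&& set0 \in T, setT \in T,
      [forall A in T, forall B in T, A :|: B \in T] &
      [forall A in T, forall B in T, A :&: B \in T]].

Definition diag : {set X * X} := [set p | p.1 == p.2].
Definition inv_rel (V : {set X * X}) : {set X * X} := [set p | (p.2, p.1) \in V].
Definition comp_rel (V W : {set X * X}) : {set X * X} :=
  [set p | [exists z, ((p.1, z) \in V) && ((z, p.2) \in W)]].
Definition section (V : {set X * X}) (x : X) : {set X} := [set y | (x, y) \in V].

Definition is_uniformity (U : {set {set X * X}}) : bool :=
  [&& setT \in U,
      [forall V in U, forall W : {set X * X}, (V \subset W) ==> (W \in U)],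
      [forall V in U, forall W in U, V :&: W \in U],
      [forall V in U, diag \subset V],
      [forall V in U, inv_rel V \in U] &
      [forall V in U, exists W in U, comp_rel W W \subset V]].

Definition uniform_topology (U : {set {set X * X}}) : {set {set X}} :=
  [set O : {set X} | [forall x in O, exists V in U, section V x \subset O]].

Definition uniformizable (T : {set {set X}}) : bool :=
  [exists U : {set {set X * X}}, is_uniformity U && (uniform_topology U == T)].

(* V_f(a) = { x | exists n >= 0, f^n(x) = a }; fconnect f x a is the
   reflexive-transitive closure of x |-> f x (cf. lemma fconnect_iter). *)
Definition Vf (f : X -> X) (a : X) : {set X} := [set x | fconnect f x a].

Definition topology_of_basis (B : {set {set X}}) : {set {set X}} :=
  [set O : {set X} | [exists S : {set {set X}}, (S \subset B) && (O == \bigcup_(A in S) A)]].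

Definition functional_alexandroff_topology (f : X -> X) : {set {set X}} :=
  topology_of_basis [set Vf f a | a in X].

Definition functional_alexandroff (T : {set {set X}}) : bool :=
  [exists f : {ffun X -> X}, T == functional_alexandroff_topology f].

End Defs.

Fixpoint bells (n : nat) : seq nat :=
  match n with
  | 0 => [:: 1]
  | k.+1 => let s := bells k in rcons s (\sum_(i < k.+1) 'C(k, i) * nth 0 s i)
  end.
Definition bell (n : nat) : nat := nth 0 (bells n) n.

(* A uniformity on a finite set has a least entourage E, the intersection of all
   its entourages; E is an equivalence relation, and the induced topology is the
   one whose open sets are the unions of E-classes.  Conversely the entourages
   containing a given equivalence relation form a uniformity.  So uniformizable
   topologies are exactly the topologies of partitions of X, and distinct
   partitions give distinct topologies.  Each such topology is also functional
   Alexandroff: let f cycle through every block.  Counting partitions by the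
   block of a fixed point yields the Bell recursion. *)
From mathcomp Require Import all_boot.
Set Implicit Arguments. Unset Strict Implicit. Unset Printing Implicit Defensive.

Lemma size_bells k : size (bells k) = k.+1.
Proof. by elim: k => //= k IH; rewrite size_rcons IH. Qed.

Lemma nth_bells k i : i <= k -> nth 0 (bells k) i = bell i.
Proof.
elim: k => [|k IH]; first by rewrite leqn0 => /eqP ->.
rewrite leq_eqVlt => /orP[/eqP -> //|lt_ik].
by rewrite /= nth_rcons size_bells lt_ik IH.
Qed.

Lemma bellS k : bell k.+1 = \sum_(i < k.+1) 'C(k, i) * bell i.
Proof.
rewrite /bell /= nth_rcons size_bells ltnn eqxx.
by apply: eq_bigr => i _; rewrite nth_bells // -ltnS.
Qed.

Section CountPartitions.
Variable T : finType.

Definition partitions (A : {set T}) := [set P : {set {set T}} | partition P A].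

Lemma sum_subset_card (D : {set T}) (F : nat -> nat) :
  \sum_(C : {set T} | C \subset D) F #|C| = \sum_(j < #|D|.+1) 'C(#|D|, j) * F j.
Proof.
rewrite (partition_big (fun C : {set T} => (inord #|C| : 'I_#|D|.+1)) xpredT) //=.
apply: eq_bigr => j _.
transitivity (\sum_(C in [set C : {set T} | C \subset D & #|C| == j]) F j).
  apply: eq_big => C; rewrite ?inE.
    case sCD: (C \subset D) => //=.
    have le_CD : #|C| <= #|D| by apply: subset_leq_card.
    apply/eqP/eqP => [<-|eCj]; first by rewrite inordK.
    by apply: val_inj; rewrite /= inordK // eCj.
  by move=> /andP[sCD /eqP <-]; rewrite inordK // ltnS subset_leq_card.
by rewrite sum_nat_const cards_draws.
Qed.

(* The partitions of A in which the block of x is A :\: C are the sets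
   (A :\: C) |: Q with Q a partition of C. *)
Lemma card_partitions_pblock_compl (A C : {set T}) x :
    x \in A -> C \subset A :\ x ->
  #|[set P in partitions A | A :\: pblock P x == C]| = #|partitions C|.
Proof.
move=> xA sCAx.
have sCA : C \subset A by apply: subset_trans sCAx (subsetDl _ _).
have xNC : x \notin C by apply/negP => /(subsetP sCAx); rewrite !inE eqxx.
set B := A :\: C.
have xB : x \in B by rewrite !inE xNC.
have BC_A : B :|: C = A by rewrite setUC -[RHS](setID A C) (setIidPr sCA).
have BNQ Q : Q \in partitions C -> B \notin Q.
  rewrite inE => pQ; apply/negP => BQ.
  by move: (subsetP (partitionS pQ BQ) x xB); rewrite (negbTE xNC).
have -> : [set P in partitions A | A :\: pblock P x == C]
          = (fun Q => B |: Q) @: partitions C.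
  apply/setP => P; rewrite !inE; apply/andP/imsetP => [[pA /eqP eC] | [Q]].
    have Px : pblock P x \in P by apply: pblock_mem; rewrite (cover_partition pA).
    have eB : B = pblock P x.
      by rewrite /B -eC setDDr setDv set0U; apply/setIidPr/(partitionS pA)/Px.
    exists (P :\ pblock P x); first by rewrite inE -eC; apply: partitionD1.
    by rewrite eB setD1K.
  rewrite inE => pQ ->.
  have pBQ : partition (B |: Q) (B :|: C).
    apply: partitionU1 => //; first by apply/set0Pn; exists x.
    by rewrite -setI_eq0 setIDAC setDIl setDv setI0.
  rewrite -BC_A pBQ; split => //.
  rewrite (def_pblock (partition_trivIset pBQ) (setU11 _ _) xB) BC_A.
  by rewrite /B setDDr setDv set0U; apply/eqP/setIidPr.
apply: card_in_imset => Q1 Q2 pQ1 pQ2 eQ.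
by rewrite -(setU1K (BNQ _ pQ1)) eQ setU1K // BNQ.
Qed.

Lemma card_partitions (A : {set T}) : #|partitions A| = bell #|A|.
Proof.
have [n leAn] := ubnP #|A|; elim: n A leAn => // n IH A leAn.
have [->|[x xA]] := set_0Vmem A.
  have -> : partitions (set0 : {set T}) = [set set0].
    by apply/setP => P; rewrite !inE partition_set0.
  by rewrite cards1 cards0.
have cardA : #|A| = #|A :\ x|.+1 by rewrite (cardsD1 x A) xA.
rewrite cardA bellS -sum1_card.
rewrite (partition_big (fun P => A :\: pblock P x) (fun C => C \subset A :\ x)) /=.
  rewrite -sum_subset_card; apply: eq_bigr => C sCAx.
  rewrite -IH; last first.
    by apply: leq_ltn_trans (subset_leq_card sCAx) _; rewrite -ltnS -cardA.
  rewrite -(card_partitions_pblock_compl xA sCAx) -sum1_card.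
  by apply: eq_bigl => P; rewrite !inE.
move=> P; rewrite inE => pA; apply/subsetP => y; rewrite !inE => /andP[yNPx ->].
rewrite andbT; apply: contraNneq yNPx => ->.
by rewrite mem_pblock (cover_partition pA).
Qed.

End CountPartitions.

Section PartitionTopology.
Variable X : finType.

Definition partition_topology (P : {set {set X}}) : {set {set X}} :=
  [set O : {set X} | [forall x in O, pblock P x \subset O]].

Lemma partition_topology_is_topology P : is_topology (partition_topology P).
Proof.
rewrite /is_topology !inE; apply/and4P; split.
- by apply/forall_inP => x; rewrite inE.
- by apply/forall_inP => x _; apply: subsetT.
- apply/forall_inP => A; rewrite inE => /forall_inP openA.
  apply/forall_inP => B; rewrite inE => /forall_inP openB.
  rewrite inE; apply/forall_inP => x; rewrite inE => /orP[xA|xB].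
    exact: subset_trans (openA x xA) (subsetUl _ _).
  exact: subset_trans (openB x xB) (subsetUr _ _).
- apply/forall_inP => A; rewrite inE => /forall_inP openA.
  apply/forall_inP => B; rewrite inE => /forall_inP openB.
  rewrite inE; apply/forall_inP => x; rewrite inE => /andP[xA xB].
  by rewrite subsetI openA ?openB.
Qed.

Variable P : {set {set X}}.
Hypothesis partP : partition P [set: X].

Lemma pblock_refl x : x \in pblock P x.
Proof. by rewrite mem_pblock (cover_partition partP) inE. Qed.

Lemma pblock_eq x y : y \in pblock P x -> pblock P y = pblock P x.
Proof. by move=> yPx; rewrite (same_pblock (partition_trivIset partP) yPx). Qed.

Lemma pblock_sym x y : y \in pblock P x -> x \in pblock P y.
Proof. by move=> /pblock_eq ->; apply: pblock_refl. Qed.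

Lemma pblock_open x : pblock P x \in partition_topology P.
Proof. by rewrite inE; apply/forall_inP => y /pblock_eq ->. Qed.

Lemma partition_topology_basis :
  topology_of_basis [set pblock P a | a in X] = partition_topology P.
Proof.
apply/setP => O; rewrite !inE.
apply/existsP/forall_inP => [[S /andP[sSB /eqP ->]] x | openO].
  case/bigcupP => B BS xB; have /imsetP[a _ eB] := subsetP sSB B BS.
  by rewrite eB in BS xB; rewrite (pblock_eq xB); apply: bigcup_sup BS.
exists [set B in [set pblock P a | a in X] | B \subset O].
apply/andP; split; first by apply/subsetP => B; rewrite inE => /andP[].
apply/eqP/setP => y; apply/idP/bigcupP => [yO | [B]].
  by exists (pblock P y); rewrite ?inE ?imset_f ?openO ?pblock_refl.
by rewrite !inE => /andP[_ /subsetP]; apply.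
Qed.

Definition block_rel : {set X * X} := [set p | p.2 \in pblock P p.1].

Lemma section_block_rel x : section block_rel x = pblock P x.
Proof. by apply/setP => y; rewrite !inE. Qed.

Lemma uniformity_above_block_rel :
  is_uniformity [set V : {set X * X} | block_rel \subset V].
Proof.
apply/andP; split; first by rewrite inE subsetT.
apply/and5P; split.
- apply/forall_inP => V; rewrite inE => EV; apply/forallP => W; apply/implyP => VW.
  by rewrite inE (subset_trans EV VW).
- apply/forall_inP => V; rewrite inE => EV; apply/forall_inP => W; rewrite inE => EW.
  by rewrite inE subsetI EV EW.
- apply/forall_inP => V; rewrite inE; apply: subset_trans.
  by apply/subsetP => -[a b]; rewrite !inE /= => /eqP <-; apply: pblock_refl.
- apply/forall_inP => V; rewrite !inE => EV.
  apply/subsetP => -[a b]; rewrite !inE /= => /pblock_sym ba.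
  by apply: (subsetP EV); rewrite inE.
- apply/forall_inP => V; rewrite inE => EV.
  apply/exists_inP; exists block_rel; first by rewrite inE.
  apply: subset_trans EV; apply/subsetP => -[a b]; rewrite !inE /=.
  by case/existsP => z /andP[]; rewrite !inE /= => /pblock_eq <-.
Qed.

(* Walking around each block along its enumeration gives a map whose
   orbit-closures V_f(a) are exactly the blocks. *)
Definition block_cycle : {ffun X -> X} := [ffun x => next (enum (pblock P x)) x].

Lemma Vf_block_cycle a : Vf block_cycle a = pblock P a.
Proof.
apply/setP => x; rewrite inE.
have cyc : fcycle block_cycle (enum (pblock P x)).
  rewrite (@eq_in_cycle _ (mem (enum (pblock P x))) _ (frel (next (enum (pblock P x))))).
  - exact: cycle_next (enum_uniq _).
  - by move=> y z; rewrite !mem_enum => yPx _ /=; rewrite ffunE (pblock_eq yPx).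
  - by apply/allP.
rewrite (fconnect_cycle cyc) ?mem_enum ?pblock_refl //.
by apply/idP/idP; apply: pblock_sym.
Qed.

Lemma functional_alexandroff_partition_topology :
  functional_alexandroff (partition_topology P).
Proof.
apply/existsP; exists block_cycle; rewrite /functional_alexandroff_topology.
rewrite -partition_topology_basis; apply/eqP/congr1/eq_imset => a.
by rewrite Vf_block_cycle.
Qed.

End PartitionTopology.

Arguments partition_topology {X}.

Lemma partition_topology_inj (X : finType) :
  {in partitions [set: X] &, injective partition_topology}.
Proof.
suff sub P Q : partition P [set: X] -> partition Q [set: X] ->
    partition_topology P = partition_topology Q -> P \subset Q.
  by move=> P Q; rewrite !inE => pP pQ ePQ; apply/eqP; rewrite eqEsubset !sub.
move=> pP pQ ePQ; apply/subsetP => B BP.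
have /set0Pn[x xB] := partition_neq0 pP BP.
have <- := def_pblock (partition_trivIset pP) BP xB.
have : pblock Q x \in partition_topology P by rewrite ePQ pblock_open.
have : pblock P x \in partition_topology Q by rewrite -ePQ pblock_open.
rewrite !inE => /forall_inP/(_ x (pblock_refl pP x)) sPQ.
move=> /forall_inP/(_ x (pblock_refl pQ x)) sQP.
have -> : pblock P x = pblock Q x by apply/eqP; rewrite eqEsubset sPQ sQP.
by apply: pblock_mem; rewrite (cover_partition pQ) inE.
Qed.

Lemma uniform_topology_least_entourage (X : finType) (U : {set {set X * X}})
    (E : {set X * X}) (P : {set {set X}}) :
    E \in U -> (forall V, V \in U -> E \subset V) ->
    (forall x, section E x = pblock P x) ->
  uniform_topology U = partition_topology P.
Proof.
move=> EU Emin sectionE; apply/setP => O; rewrite !inE.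
apply/forall_inP/forall_inP => openO x xO.
  have /exists_inP[V VU sVO] := openO x xO.
  rewrite -sectionE; apply: subset_trans sVO.
  by apply/subsetP => y; rewrite !inE; apply: (subsetP (Emin V VU)).
by apply/exists_inP; exists E; rewrite ?sectionE ?openO.
Qed.

Section UniformityOnFiniteSet.
Variables (X : finType) (U : {set {set X * X}}).
Hypothesis unifU : is_uniformity U.

Definition least_entourage : {set X * X} := \bigcap_(V in U) V.

Lemma least_entourage_mem : least_entourage \in U.
Proof.
case/andP: unifU => TU /and5P[_ capU _ _ _].
apply: (big_ind (fun V => V \in U)) => // V W VU WU.
by move/forall_inP: capU => /(_ V VU) /forall_inP; apply.
Qed.

Lemma least_entourage_equiv :
  {in [set: X] & &, equivalence_rel (fun x y => (x, y) \in least_entourage)}.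
Proof.
have EU := least_entourage_mem.
have Emin V : V \in U -> least_entourage \subset V by apply: bigcap_inf.
case/andP: unifU => _ /and5P[_ _ /forall_inP diagU /forall_inP invU /forall_inP compU].
have Erefl x : (x, x) \in least_entourage.
  by apply: (subsetP (diagU _ EU)); rewrite inE.
have Esym x y : (x, y) \in least_entourage -> (y, x) \in least_entourage.
  by move/(subsetP (Emin _ (invU _ EU))); rewrite inE.
(* Some entourage W satisfies W \o W \subset E, and E \subset W by minimality. *)
have Etrans x y z : (x, y) \in least_entourage -> (y, z) \in least_entourage ->
    (x, z) \in least_entourage.
  have /exists_inP[W WU sWWE] := compU _ EU.
  move=> /(subsetP (Emin _ WU)) xy /(subsetP (Emin _ WU)) yz.
  by apply: (subsetP sWWE); rewrite inE; apply/existsP; exists y; rewrite xy yz.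
move=> x y z _ _ _; split => // xy.
by apply/idP/idP => [/(Etrans _ _ _ (Esym _ _ xy))|]; last apply: Etrans.
Qed.

Lemma uniform_topology_partition :
  exists2 P, partition P [set: X] & uniform_topology U = partition_topology P.
Proof.
exists (equivalence_partition (fun x y => (x, y) \in least_entourage) [set: X]).
  exact: equivalence_partitionP least_entourage_equiv.
apply: uniform_topology_least_entourage least_entourage_mem _ _.
  by move=> V; apply: bigcap_inf.
move=> x; apply/setP => y.
by rewrite inE pblock_equivalence_partition ?inE //; apply: least_entourage_equiv.
Qed.

End UniformityOnFiniteSet.

Lemma uniformizable_topologyE (X : finType) (T : {set {set X}}) :
  is_topology T && uniformizable T = (T \in partition_topology @: partitions [set: X]).
Proof.
apply/andP/imsetP => [[_ /existsP[U /andP[unifU /eqP <-]]] | [P]].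
  by have [P pP ->] := uniform_topology_partition unifU; exists P; rewrite ?inE.
rewrite inE => pP ->; split; first exact: partition_topology_is_topology.
apply/existsP; exists [set V : {set X * X} | block_rel P \subset V].
rewrite uniformity_above_block_rel //=; apply/eqP.
apply: uniform_topology_least_entourage (section_block_rel P); first by rewrite inE.
by move=> V; rewrite inE.
Qed.

Theorem mainTheorem6 (X : finType) (n : nat) (hn : 1 <= n) (hX : #|X| = n) :
  #|[set T : {set {set X}} | is_topology T && uniformizable T]| = bell n /\
  #|[set T : {set {set X}} | [&& is_topology T, uniformizable T
                                 & functional_alexandroff T]]| = bell n.
Proof.
have uniformE : [set T : {set {set X}} | is_topology T && uniformizable T]
                = partition_topology @: partitions [set: X].
  by apply/setP => T; rewrite inE uniformizable_topologyE.
have uniformFAE : [set T : {set {set X}} | [&& is_topology T, uniformizable T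
                                              & functional_alexandroff T]]
                  = partition_topology @: partitions [set: X].
  rewrite -uniformE; apply/setP => T; rewrite !inE andbA.
  apply/andb_idr; rewrite uniformizable_topologyE => /imsetP[P].
  by rewrite inE => pP ->; apply: functional_alexandroff_partition_topology.
have card_topologies : #|partition_topology @: partitions [set: X]| = bell n.
  by rewrite card_in_imset ?card_partitions ?cardsT ?hX //; apply: partition_topology_inj.
by rewrite uniformE uniformFAE card_topologies.
Qed.
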